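(* Let $\mathcal{A}$ be an abelian category and $\xi\colon 0\to K\to X\xrightarrow{\alpha}Y\to 0$ a short exact sequence. The following are equivalent: (1) $\alpha$ is right minimal; (2) every endomorphism $u\colon K\to K$ with $[\xi]=[u.\xi]$ is an automorphism; (3) the connecting map $c(\xi,K)\colon\mathrm{Hom}_{\mathcal{A}}(K,K)\to\mathrm{Ext}^1_{\mathcal{A}}(Y,K)$ is a right minimal morphism of $\Gamma(K)$-modules.
   Context: A morphism $\alpha\colon X\to Y$ is right minimal if every endomorphism $u\colon X\to X$ with $\alpha=\alpha\circ u$ is an automorphism (same definition in any category, e.g. of modules). $u.\xi$ is the pushout of $\xi$ along $u$; $c(\xi,K)$ sends $u$ to $[u.\xi]$. $\Gamma(K)=\mathrm{End}_{\mathcal{A}}(K)$. *)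

From HB Require Import structures.
From mathcomp Require Import all_boot all_algebra.
Set Implicit Arguments. Unset Strict Implicit. Unset Printing Implicit Defensive.
Import GRing.Theory.
Local Open Scope ring_scope.

Record preadd := PreAdd {
  obj : Type;
  mor : obj -> obj -> zmodType;
  cmp : forall a b c : obj, mor b c -> mor a b -> mor a c;
  idm : forall a : obj, mor a a;
  cmpA : forall (a b c d : obj) (h : mor c d) (g : mor b c) (f : mor a b),
    cmp h (cmp g f) = cmp (cmp h g) f;
  cmp1f : forall (a b : obj) (f : mor a b), cmp (idm b) f = f;
  cmpf1 : forall (a b : obj) (f : mor a b), cmp f (idm a) = f;
  cmpDl : forall (a b c : obj) (g1 g2 : mor b c) (f : mor a b),
    cmp (g1 + g2) f = cmp g1 f + cmp g2 f;
  cmpDr : forall (a b c : obj) (g : mor b c) (f1 f2 : mor a b),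
    cmp g (f1 + f2) = cmp g f1 + cmp g f2
}.
Arguments cmp {p a b c}.
Arguments idm {p}.
Arguments mor : clear implicits.

Section Defs.
Variable C : preadd.
Local Notation Hom := (mor C).

Definition mono (a b : obj C) (f : Hom a b) :=
  forall (t : obj C) (g h : Hom t a), cmp f g = cmp f h -> g = h.
Definition epi (a b : obj C) (f : Hom a b) :=
  forall (t : obj C) (g h : Hom b t), cmp g f = cmp h f -> g = h.
Definition iso (a b : obj C) (f : Hom a b) :=
  exists g : Hom b a, cmp g f = idm a /\ cmp f g = idm b.

Definition is_zero_obj (z : obj C) :=
  (forall (a : obj C) (f : Hom z a), f = 0) /\ (forall (a : obj C) (f : Hom a z), f = 0).

Definition is_kernel (A B K : obj C) (f : Hom A B) (k : Hom K A) :=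
  cmp f k = 0 /\
  forall (T : obj C) (g : Hom T A), cmp f g = 0 ->
    exists! h : Hom T K, cmp k h = g.

Definition is_cokernel (A B Q : obj C) (f : Hom A B) (q : Hom B Q) :=
  cmp q f = 0 /\
  forall (T : obj C) (g : Hom B T), cmp g f = 0 ->
    exists! h : Hom Q T, cmp h q = g.

Definition is_biproduct (a b s : obj C) (i1 : Hom a s) (i2 : Hom b s)
    (p1 : Hom s a) (p2 : Hom s b) :=
  [/\ cmp p1 i1 = idm a, cmp p2 i2 = idm b, cmp p1 i2 = 0, cmp p2 i1 = 0
    & cmp i1 p1 + cmp i2 p2 = idm s].

Definition abelian :=
  (exists z : obj C, is_zero_obj z) /\
  [/\ (forall a b : obj C, exists s (i1 : Hom a s) (i2 : Hom b s)
        (p1 : Hom s a) (p2 : Hom s b), is_biproduct i1 i2 p1 p2),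
      (forall (a b : obj C) (f : Hom a b), exists K (k : Hom K a), is_kernel f k),
      (forall (a b : obj C) (f : Hom a b), exists Q (q : Hom b Q), is_cokernel f q),
      (forall (a b : obj C) (f : Hom a b), mono f ->
        exists c (g : Hom b c), is_kernel g f)
    & (forall (a b : obj C) (f : Hom a b), epi f ->
        exists c (g : Hom c a), is_cokernel g f)].

Definition ses (K X Y : obj C) (i : Hom K X) (p : Hom X Y) :=
  is_kernel p i /\ is_cokernel i p.

Definition right_minimal (X Y : obj C) (f : Hom X Y) :=
  forall u : Hom X X, cmp f u = f -> iso u.

Record extension (K Y : obj C) := Extension {
  ext_mid : obj C;
  ext_in : Hom K ext_mid;
  ext_out : Hom ext_mid Y;
  ext_ses : ses ext_in ext_out
}.

(* Yoneda equivalence of extensions (equality of classes in Ext^1(Y,K)) *)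
Definition yequiv (K Y : obj C) (e1 e2 : extension K Y) :=
  exists phi : Hom (ext_mid e1) (ext_mid e2),
    cmp phi (ext_in e1) = ext_in e2 /\ cmp (ext_out e2) phi = ext_out e1.

Definition is_pushout_ext (K Y : obj C) (xi : extension K Y) (u : Hom K K)
    (eta : extension K Y) :=
  exists w : Hom (ext_mid xi) (ext_mid eta),
    [/\ cmp (ext_in eta) u = cmp w (ext_in xi),
        cmp (ext_out eta) w = ext_out xi
      & (forall (T : obj C) (a : Hom K T) (b : Hom (ext_mid xi) T),
          cmp a u = cmp b (ext_in xi) ->
          exists! h : Hom (ext_mid eta) T,
            cmp h (ext_in eta) = a /\ cmp h w = b)].

(* [u.xi] = [v.xi] in Ext^1(Y,K), i.e. c(xi,K) u = c(xi,K) v *)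
Definition conn_eq (K Y : obj C) (xi : extension K Y) (u v : Hom K K) :=
  exists eta eta' : extension K Y,
    [/\ is_pushout_ext xi u eta, is_pushout_ext xi v eta' & yequiv eta eta'].

(* Gamma(K)-linear endomorphisms of the regular module Hom(K,K)
   (Gamma(K) = End(K) acting by post-composition). *)
Definition gamma_linear (K : obj C) (phi : Hom K K -> Hom K K) :=
  (forall f g : Hom K K, phi (f + g) = phi f + phi g) /\
  (forall u f : Hom K K, phi (cmp u f) = cmp u (phi f)).

(* c(xi,K) : Hom(K,K) -> Ext^1(Y,K) is right minimal as a morphism of
   Gamma(K)-modules: every Gamma(K)-endomorphism phi of Hom(K,K) with
   c o phi = c is an automorphism. *)
Definition conn_right_minimal (K Y : obj C) (xi : extension K Y) :=
  forall phi : Hom K K -> Hom K K, gamma_linear phi ->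
    (forall f : Hom K K, conn_eq xi (phi f) f) -> bijective phi.

End Defs.

From mathcomp Require Import all_boot all_algebra.
Set Implicit Arguments. Unset Strict Implicit. Unset Printing Implicit Defensive.
Import GRing.Theory.
Local Open Scope ring_scope.

(* An endomorphism w of X over Y that restricts to u on K is of the form
   idm - i d with d i = idm - u, so w is invertible exactly when u is, and then
   xi is its own pushout along u; conversely a Yoneda equivalence u.xi ~ xi
   composed with the pushout map is such a w.  This gives (1) <-> (2).
   A Gamma(K)-linear endomorphism of End(K) is right composition with
   v = phi(idm), and once u fixes [xi] the pushouts of xi along f u and along f
   are equivalent; so c(xi,K) o phi = c(xi,K) says that v fixes [xi], which
   gives (2) <-> (3). *)

Section Preadditive.
Variable C : preadd.
Local Notation Hom := (mor C).

Lemma cmp0r (a b c : obj C) (g : Hom b c) : cmp g (0 : Hom a b) = 0.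
Proof.
have H := cmpDr g (0 : Hom a b) 0; rewrite addr0 in H.
by apply: (addrI (cmp g 0)); rewrite addr0 -H.
Qed.

Lemma cmp0l (a b c : obj C) (f : Hom a b) : cmp (0 : Hom b c) f = 0.
Proof.
have H := cmpDl (0 : Hom b c) 0 f; rewrite addr0 in H.
by apply: (addrI (cmp 0 f)); rewrite addr0 -H.
Qed.

Lemma cmpNr (a b c : obj C) (g : Hom b c) (f : Hom a b) : cmp g (- f) = - cmp g f.
Proof. by apply: (addrI (cmp g f)); rewrite -cmpDr !subrr cmp0r. Qed.

Lemma cmpNl (a b c : obj C) (g : Hom b c) (f : Hom a b) : cmp (- g) f = - cmp g f.
Proof. by apply: (addrI (cmp g f)); rewrite -cmpDl !subrr cmp0l. Qed.

Lemma cmpBr (a b c : obj C) (g : Hom b c) (f1 f2 : Hom a b) :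
  cmp g (f1 - f2) = cmp g f1 - cmp g f2.
Proof. by rewrite cmpDr cmpNr. Qed.

Lemma cmpBl (a b c : obj C) (g1 g2 : Hom b c) (f : Hom a b) :
  cmp (g1 - g2) f = cmp g1 f - cmp g2 f.
Proof. by rewrite cmpDl cmpNl. Qed.

Lemma unique_eq (T : Type) (P : T -> Prop) (x y : T) :
  (exists! h, P h) -> P x -> P y -> x = y.
Proof. by case=> h [_ U] Px Py; rewrite -(U x Px) (U y Py). Qed.

Lemma kernel_mono (A B K : obj C) (f : Hom A B) (k : Hom K A) :
  is_kernel f k -> mono k.
Proof.
move=> [fk0 Hk] T g h Hgh.
have Hg : cmp f (cmp k g) = 0 by rewrite cmpA fk0 cmp0l.
exact: (unique_eq (Hk T _ Hg)).
Qed.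

Lemma cokernel_epi (A B Q : obj C) (f : Hom A B) (q : Hom B Q) :
  is_cokernel f q -> epi q.
Proof.
move=> [qf0 Hq] T g h Hgh.
have Hg : cmp (cmp g q) f = 0 by rewrite -cmpA qf0 cmp0r.
exact: (unique_eq (Hq T _ Hg)).
Qed.

Lemma mono_cmp0 (a b t : obj C) (k : Hom a b) (g : Hom t a) :
  mono k -> cmp k g = 0 -> g = 0.
Proof. by move=> Hk H; apply: Hk; rewrite H cmp0r. Qed.

Lemma cmp0_mono (a b : obj C) (k : Hom a b) :
  (forall (t : obj C) (g : Hom t a), cmp k g = 0 -> g = 0) -> mono k.
Proof.
move=> Hk t g h Hgh; apply/eqP; rewrite -subr_eq0; apply/eqP.
by apply: Hk; rewrite cmpBr Hgh subrr.
Qed.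

Lemma ses_cmp0 (K X Y : obj C) (i : Hom K X) (p : Hom X Y) : ses i p -> cmp p i = 0.
Proof. by case=> [[]]. Qed.

Lemma yequiv_trans (K Y : obj C) (e1 e2 e3 : extension K Y) :
  yequiv e1 e2 -> yequiv e2 e3 -> yequiv e1 e3.
Proof.
move=> [f [f1 f2]] [g [g1 g2]]; exists (cmp g f); split.
  by rewrite -cmpA f1.
by rewrite cmpA g2.
Qed.

End Preadditive.

Definition fixes_class (C : preadd) (K Y : obj C) (xi : extension K Y)
    (u : mor C K K) :=
  exists eta, is_pushout_ext xi u eta /\ yequiv eta xi.

Section Extension.
Variables (C : preadd) (K Y : obj C) (xi : extension K Y).
Local Notation Hom := (mor C).
Local Notation X := (ext_mid xi).
Local Notation i := (ext_in xi).
Local Notation al := (ext_out xi).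

Lemma ext_in_mono : mono i.
Proof. by case: (ext_ses xi) => /kernel_mono. Qed.

Lemma endo_over_factor (u : Hom K K) (w : Hom X X) :
  cmp w i = cmp i u -> cmp al w = al ->
  exists d : Hom X K, w = idm X - cmp i d /\ cmp d i = idm K - u.
Proof.
move=> Hwi Hal; case: (ext_ses xi) => [[_ Hk] _].
have H0 : cmp al (idm X - w) = 0 by rewrite cmpBr cmpf1 Hal subrr.
case: (Hk _ _ H0) => d [Hd _]; exists d; split.
  by rewrite Hd opprB addrC subrK.
by apply: ext_in_mono; rewrite cmpA Hd cmpBl cmpBr cmp1f cmpf1 Hwi.
Qed.

(* Inverse of [idm - i d] is [idm + i u^-1 d], because [d i = idm - u]. *)
Lemma iso_endo_over (u : Hom K K) (w : Hom X X) :
  cmp w i = cmp i u -> cmp al w = al -> iso w <-> iso u.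
Proof.
move=> Hwi Hal; split.
  move=> [v [vw wv]]; case: (ext_ses xi) => [[ai0 Hk] _].
  have Hv : cmp al v = al by rewrite -{1}Hal -cmpA wv cmpf1.
  have H0 : cmp al (cmp v i) = 0 by rewrite cmpA Hv ai0.
  case: (Hk _ _ H0) => u' [Hu' _].
  exists u'; split; apply: ext_in_mono.
    by rewrite cmpA Hu' -cmpA -Hwi cmpA vw cmp1f cmpf1.
  by rewrite cmpA -Hwi -cmpA Hu' cmpA wv cmp1f cmpf1.
move=> [u' [u'u uu']]; have [d [-> Hdi]] := endo_over_factor Hwi Hal.
have E1 : cmp u' (cmp d (cmp i d)) = cmp u' d - d.
  by rewrite (cmpA d) Hdi cmpBl cmp1f cmpBr cmpA u'u cmp1f.
have E2 : cmp d (cmp i (cmp u' d)) = cmp u' d - d.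
  by rewrite (cmpA d) (cmpA _ u') Hdi !cmpBl cmp1f uu' cmp1f.
exists (idm X + cmp i (cmp u' d)); split.
  by rewrite cmpDl cmp1f !cmpBr cmpf1 -!cmpA E1 cmpBr subKr subrK.
by rewrite cmpBl cmp1f cmpDr cmpf1 -!cmpA E2 cmpBr subrKC addrK.
Qed.

Lemma pushout_self (u : Hom K K) (w : Hom X X) :
  cmp w i = cmp i u -> cmp al w = al -> is_pushout_ext xi u xi.
Proof.
move=> Hwi Hal; have [d [Hw Hdi]] := endo_over_factor Hwi Hal.
exists w; split => // T a b Hab.
have Hhi : cmp (b + cmp a d) i = a.
  by rewrite cmpDl -cmpA Hdi cmpBr cmpf1 Hab addrC subrK.
exists (b + cmp a d); split; first split => //.
  by rewrite Hw cmpBr cmpf1 cmpA Hhi addrK.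
move=> h [H1 H2].
by rewrite -[h in RHS]cmpf1 -(subrK (cmp i d) (idm X)) -Hw cmpDr H2 cmpA H1.
Qed.

Lemma pushout_yequiv (v : Hom K K) (eta e : extension K Y)
    (m : Hom X (ext_mid e)) :
  is_pushout_ext xi v eta -> cmp m i = cmp (ext_in e) v ->
  cmp (ext_out e) m = al -> yequiv eta e.
Proof.
move=> [w [Hwi Hal U]] Hmi Hm.
case: (U _ _ _ (esym Hmi)) => h [[h1 h2] _].
exists h; split => //.
have H0 : cmp (0 : Hom K Y) v = cmp al i by rewrite cmp0l (ses_cmp0 (ext_ses xi)).
apply: (unique_eq (U _ _ _ H0)); split.
- by rewrite -cmpA h1 (ses_cmp0 (ext_ses e)).
- by rewrite -cmpA h2.
- exact: (ses_cmp0 (ext_ses eta)).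
- exact: Hal.
Qed.

Lemma fixes_class_yequiv (u v : Hom K K) (e : extension K Y) :
  fixes_class xi u -> is_pushout_ext xi v e ->
  forall eta, is_pushout_ext xi (cmp v u) eta -> yequiv eta e.
Proof.
move=> [e0 [[w0 [A0 B0 _]] [ps [P1 P2]]]] [w [A B _]] eta Heta.
apply: (pushout_yequiv (m := cmp w (cmp ps w0)) Heta).
  by rewrite -!cmpA -A0 (cmpA ps) P1 cmpA -A -cmpA.
by rewrite !cmpA B P2 B0.
Qed.

Lemma right_minimal_ext_out :
  right_minimal al <-> (forall u : Hom K K, fixes_class xi u -> iso u).
Proof.
split.
  move=> RM u [eta [[w [Hwi Hal _]] [ps [P1 P2]]]].
  have Hu : cmp (cmp ps w) i = cmp i u by rewrite -cmpA -Hwi cmpA P1.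
  have Hw : cmp al (cmp ps w) = al by rewrite cmpA P2 Hal.
  by apply/(iso_endo_over Hu Hw)/RM.
move=> Hfix w Hal; case: (ext_ses xi) => [[ai0 Hk] _].
have H0 : cmp al (cmp w i) = 0 by rewrite cmpA Hal ai0.
case: (Hk _ _ H0) => u [Hu _].
apply/(iso_endo_over (esym Hu) Hal)/Hfix.
exists xi; split; first exact: pushout_self (esym Hu) Hal.
by exists (idm X); rewrite cmp1f cmpf1.
Qed.

End Extension.

Section PushoutConstruction.
Variables (C : preadd) (K K' X Q s : obj C) (f : mor C K K') (i : mor C K X).
Variables (j1 : mor C K' s) (j2 : mor C X s) (p1 : mor C s K') (p2 : mor C s X).
Hypothesis Hs : is_biproduct j1 j2 p1 p2.
Variable q : mor C s Q.
Hypothesis Hq : is_cokernel (cmp j1 f - cmp j2 i) q.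

Lemma biproduct_split (T : obj C) (t : mor C s T) :
  t = cmp (cmp t j1) p1 + cmp (cmp t j2) p2.
Proof. by case: Hs => _ _ _ _ jp; rewrite -!cmpA -cmpDr jp cmpf1. Qed.

Lemma pushout_square : cmp (cmp q j1) f = cmp (cmp q j2) i.
Proof.
by case: Hq => qg _; apply/eqP; rewrite -subr_eq0 -!cmpA -cmpBr qg.
Qed.

Lemma pushout_universal (T : obj C) (a : mor C K' T) (b : mor C X T) :
  cmp a f = cmp b i ->
  exists! h : mor C Q T, cmp h (cmp q j1) = a /\ cmp h (cmp q j2) = b.
Proof.
case: Hs => pj1 pj2 p1j2 p2j1 _; case: Hq => _ Hcok Hab.
have H0 : cmp (cmp a p1 + cmp b p2) (cmp j1 f - cmp j2 i) = 0.
  rewrite cmpBr !cmpDl -!cmpA !(cmpA p1) !(cmpA p2) pj1 p2j1 p1j2 pj2.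
  by rewrite !cmp0l !cmp0r !cmp1f addr0 add0r Hab subrr.
case: (Hcok _ _ H0) => h [Hh U]; exists h; split.
  rewrite !cmpA Hh !cmpDl -!cmpA pj1 p2j1 p1j2 pj2.
  by rewrite !cmp0r !cmpf1 addr0 add0r.
move=> h' [H1 H2]; apply: U.
by rewrite [in LHS](biproduct_split (cmp h' q)) -!(cmpA h' q) H1 H2.
Qed.

Section Abelian.
Hypothesis HC : abelian C.

Lemma mono_cokernel_kernel (a b c : obj C) (g : mor C a b) (r : mor C b c) :
  mono g -> is_cokernel g r -> is_kernel r g.
Proof.
case: HC => _ [_ _ _ Hmk _] gm [rg Hr].
case: (Hmk _ _ _ gm) => c0 [k [kg Hk]]; split => // T x Hx.
case: (Hr _ _ kg) => k' [Hk' _].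
have : cmp k x = 0 by rewrite -Hk' -cmpA Hx cmp0r.
case/(Hk _ _) => y [Hy _]; exists y; split => // y' Hy'.
by apply: gm; rewrite Hy Hy'.
Qed.

Lemma pushout_mono : mono i -> mono (cmp q j1).
Proof.
move=> im; case: Hs => pj1 pj2 _ p2j1 _.
have p2g : cmp p2 (cmp j1 f - cmp j2 i) = - i.
  by rewrite cmpBr !cmpA p2j1 pj2 cmp0l cmp1f sub0r.
have gm : mono (cmp j1 f - cmp j2 i).
  apply: cmp0_mono => t x Hx; apply: (mono_cmp0 im); apply: oppr_inj.
  by rewrite oppr0 -cmpNl -p2g -cmpA Hx cmp0r.
have [_ Hg] := mono_cokernel_kernel gm Hq.
apply: cmp0_mono => t x Hx; rewrite -cmpA in Hx.
case: (Hg _ _ Hx) => z [Hz _].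
have z0 : z = 0.
  apply: (mono_cmp0 im); apply: oppr_inj.
  by rewrite oppr0 -cmpNl -p2g -cmpA Hz cmpA p2j1 cmp0l.
by rewrite -[x]cmp1f -pj1 -cmpA -Hz z0 !cmp0r.
Qed.

Lemma pushout_ses (Y : obj C) (al : mor C X Y) (al' : mor C Q Y) :
  ses i al -> cmp al' (cmp q j1) = 0 -> cmp al' (cmp q j2) = al ->
  ses (cmp q j1) al'.
Proof.
move=> [Hk Hc] al'i' al'w.
suff Hcok : is_cokernel (cmp q j1) al'.
  by split => //; apply: mono_cokernel_kernel => //; apply: pushout_mono;
     exact: kernel_mono Hk.
split => // T t ti'.
have tw0 : cmp (cmp t (cmp q j2)) i = 0 by rewrite -cmpA -pushout_square cmpA ti' cmp0l.
have [_ /(_ _ _ tw0) [h [Hh _]]] := Hc.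
have H0 : cmp (0 : mor C K' T) f = cmp (cmp t (cmp q j2)) i by rewrite cmp0l tw0.
exists h; split.
  apply: (unique_eq (pushout_universal H0)); split => //.
  - by rewrite -cmpA al'i' cmp0r.
  - by rewrite -cmpA al'w.
move=> h' Hh'; apply: (cokernel_epi Hc).
by rewrite Hh -al'w (cmpA h') Hh'.
Qed.

End Abelian.
End PushoutConstruction.

(* The pushout along [f] is the cokernel of [(f, -i) : K -> K (+) X]. *)
Lemma pushout_exists (C : preadd) (HC : abelian C) (K Y : obj C)
    (xi : extension K Y) (f : mor C K K) :
  exists eta, is_pushout_ext xi f eta.
Proof.
have [_ [Hbi _ Hcok _ _]] := HC.
case: (Hbi K (ext_mid xi)) => s [j1 [j2 [p1 [p2 Hs]]]].
case: (Hcok _ _ (cmp j1 f - cmp j2 (ext_in xi))) => Q [q Hq].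
have H0 : cmp (0 : mor C K Y) f = cmp (ext_out xi) (ext_in xi).
  by rewrite cmp0l (ses_cmp0 (ext_ses xi)).
case: (pushout_universal Hs Hq H0) => al' [[al'i' al'w] _].
exists (Extension (pushout_ses Hs Hq HC (ext_ses xi) al'i' al'w)).
exists (cmp q j2); split => //=.
  exact: pushout_square Hq.
move=> T a b Hab; exact: (pushout_universal Hs Hq Hab).
Qed.

Lemma gamma_linear_cmp (C : preadd) (K : obj C) (phi : mor C K K -> mor C K K) :
  gamma_linear phi -> forall g, phi g = cmp g (phi (idm K)).
Proof. by move=> [_ Hmul] g; rewrite -{1}(cmpf1 g) Hmul. Qed.

Lemma conn_right_minimal_fixes_class (C : preadd) (HC : abelian C) (K Y : obj C)
    (xi : extension K Y) :
  (forall u : mor C K K, fixes_class xi u -> iso u) <-> conn_right_minimal xi.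
Proof.
split.
  move=> Hfix phi Hphi Hc; set v := phi (idm K).
  case: (Hc (idm K)) => eta [eta' [Pe Pe' Ye]].
  have [v' [v'v vv']] : iso v.
    apply: Hfix; exists eta; split => //; apply: yequiv_trans Ye _.
    by apply: (pushout_yequiv (m := idm _)) Pe' _ _; rewrite ?cmp1f ?cmpf1.
  exists (fun g => cmp g v') => g; rewrite (gamma_linear_cmp Hphi) /= -/v -cmpA.
    by rewrite vv' cmpf1.
  by rewrite v'v cmpf1.
move=> Hcrm u Hu.
have [g gK Kg] : bijective (fun f : mor C K K => cmp f u).
  apply: Hcrm => [|f]; first by split => [f g|u' f]; rewrite ?cmpDl ?cmpA.
  have [e1 P1] := pushout_exists HC xi (cmp f u).
  have [e2 P2] := pushout_exists HC xi f.
  by exists e1, e2; split => //; apply: fixes_class_yequiv Hu P2 _ P1.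
exists (g (idm K)); split; first exact: Kg.
by apply: (can_inj gK) => /=; rewrite -cmpA Kg cmpf1 cmp1f.
Qed.

Theorem lemma3p1 (C : preadd) (HC : abelian C) (K X Y : obj C)
    (i : mor C K X) (alpha : mor C X Y) (Hxi : ses i alpha) :
  let xi := Extension Hxi in
  (right_minimal alpha <->
     (forall u : mor C K K, (exists eta, is_pushout_ext xi u eta /\ yequiv eta xi) -> iso u))
  /\
  ((forall u : mor C K K, (exists eta, is_pushout_ext xi u eta /\ yequiv eta xi) -> iso u) <->
     conn_right_minimal xi).
Proof.
move=> xi; split; first exact: right_minimal_ext_out xi.
exact: (conn_right_minimal_fixes_class HC xi).
Qed.
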